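(* Let $K\subseteq\mathbb{R}^n$ be a nonempty compact set, let $\mathbf{c}\in\mathbb{Z}^n$, let $F:=F_K(\mathbf{c})$, and assume $h_K(\mathbf{c})\in\mathbb{Z}$. Then for every $\mathbf{a}\in\mathbb{Z}^n$ there exists $N\ge0$ such that $$H^{\rm cg}_K(\mathbf{a}+i\mathbf{c})\cap H^=_K(\mathbf{c}) = H^{\rm cg}_F(\mathbf{a})\cap H^=_K(\mathbf{c})\quad\text{for all integers } i\ge N.$$
   Context: $h_K(\mathbf{a})=\sup_{\mathbf{x}\in K}\mathbf{a}\mathbf{x}$ (with $h_\emptyset\equiv-\infty$). For nonempty compact $K$: $H^=_K(\mathbf{a}):=\{\mathbf{x}\in\mathbb{R}^n:\mathbf{a}\mathbf{x}=h_K(\mathbf{a})\}$ and $F_K(\mathbf{a}):=K\cap H^=_K(\mathbf{a})$. For $\mathbf{a}\in\mathbb{Z}^n$, the CG cut of $K$ induced by $\mathbf{a}$ is the halfspace $H^{\rm cg}_K(\mathbf{a}):=\{\mathbf{x}\in\mathbb{R}^n:\mathbf{a}\mathbf{x}\le\lfloor h_K(\mathbf{a})\rfloor\}$. *)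

From HB Require Import structures.
From mathcomp Require Import all_boot all_order all_algebra.
From mathcomp Require Import all_classical all_reals all_analysis.
Set Implicit Arguments. Unset Strict Implicit. Unset Printing Implicit Defensive.
Import Order.TTheory GRing.Theory Num.Theory.
Import numFieldNormedType.Exports.
Local Open Scope ring_scope.
Local Open Scope classical_set_scope.

Definition idot (R : realType) (n : nat) (a : 'rV[int]_n) (x : 'rV[R]_n) : R :=
  \sum_(i < n) (a 0 i)%:~R * x 0 i.

Definition hK (R : realType) (n : nat) (K : set 'rV[R]_n) (a : 'rV[int]_n) : R :=
  sup [set idot a x | x in K].

Definition Heq (R : realType) (n : nat) (K : set 'rV[R]_n) (a : 'rV[int]_n)
  : set 'rV[R]_n := [set x | idot a x = hK K a].

Definition face (R : realType) (n : nat) (K : set 'rV[R]_n) (a : 'rV[int]_n)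
  : set 'rV[R]_n := K `&` Heq K a.

Definition Hcg (R : realType) (n : nat) (K : set 'rV[R]_n) (a : 'rV[int]_n)
  : set 'rV[R]_n := [set x | idot a x <= (Num.floor (hK K a))%:~R].

From HB Require Import structures.
From mathcomp Require Import all_boot all_order all_algebra.
From mathcomp Require Import all_classical all_reals all_analysis.
Import Order.TTheory GRing.Theory Num.Theory.
Import numFieldNormedType.Exports.
Local Open Scope ring_scope.
Local Open Scope classical_set_scope.

(* Write h := h_K(c) (an integer z) and F := F_K(c).  On the
   hyperplane H^=_K(c) we have (a + i c) x = a x + i h, so both sides of the
   claimed equality are cut out of H^=_K(c) by an inequality on a x, and it
   suffices to show  floor(h_K(a + i c)) = floor(h_F(a)) + i z  for large i.
   The lower bound h_F(a) + i h <= h_K(a + i c) is immediate (evaluate at a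
   maximiser of a on F).  The upper bound h_K(a + i c) < floor(h_F(a)) + 1 + i h
   is a penalty argument on compact sets: the points of K where a x is large
   stay a positive distance (in c x) below the maximal level h, so the penalty
   i (c x - h) eventually outweighs the bounded excess of a x. *)

Lemma compact_sup_attained {T : topologicalType} {R : realType} {K : set T}
    {f : T -> R} :
  K !=set0 -> compact K -> continuous f ->
  exists2 x0, K x0 & (forall y, K y -> f y <= f x0) /\
                     sup [set f x | x in K] = f x0.
Proof.
move=> K0 cK cf.
have [x0 /set_mem Kx0 mx0] := compact_EVT_max K0 cK (continuous_subspaceT cf).
have ub y : K y -> f y <= f x0 by move=> Ky; apply: mx0; exact/mem_set.
exists x0 => //; split => //; apply/eqP; rewrite eq_le; apply/andP; split.
  by apply: ge_sup; [exists (f x0), x0 | move=> _ [y Ky <-]; exact: ub].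
apply: sup_upper_bound; last by exists x0.
by split; [exists (f x0), x0 | exists (f x0) => _ [y Ky <-]; exact: ub].
Qed.

Lemma compact_uniform_gap (T : topologicalType) (R : realType) (D : set T)
    (g : T -> R) (h : R) :
  compact D -> continuous g -> (forall x, D x -> g x < h) ->
  exists2 eps, 0 < eps & forall x, D x -> g x <= h - eps.
Proof.
move=> cD cg glt.
have [D0 | /set0P/negP/negPn/eqP D_empty] := pselect (D !=set0); last first.
  by exists 1 => // x; rewrite D_empty.
have [y0 Dy0 [my0 _]] := compact_sup_attained D0 cD cg.
exists (h - g y0); first by rewrite subr_gt0; exact: glt.
by move=> x /my0; rewrite opprB addrC subrK.
Qed.

Lemma eventually_penalized {T : topologicalType} {R : realType} {K : set T}
    {f g : T -> R} (h m : R) :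
  K !=set0 -> compact K -> continuous f -> continuous g ->
  (forall x, K x -> g x <= h) -> (forall x, K x -> g x = h -> f x < m) ->
  exists N : nat, forall i : nat, (N <= i)%N ->
    forall x, K x -> f x + i%:R * g x < m + i%:R * h.
Proof.
move=> K0 cK cf cg gle flt.
pose D := K `&` [set x | m <= f x].
have cD : compact D.
  apply: compact_closedI => //.
  exact: (preimage_closed (fun x _ => cf x) (@closed_ge R m)).
have [eps eps0 gap] : exists2 eps, 0 < eps & forall x, D x -> g x <= h - eps.
  apply: compact_uniform_gap => // x [Kx mfx]; rewrite lt_neqAle gle // andbT.
  by apply/eqP => gxh; move: (flt x Kx gxh); rewrite ltNge mfx.
have [x2 _ [fmax _]] := compact_sup_attained K0 cK cf.
exists (Num.truncn ((f x2 - m) / eps)).+1 => i Ni x Kx.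
have [fxm | mfx] := ltP (f x) m.
  by apply: ltr_leD => //; apply: ler_wpM2l => //; exact: gle.
have excess : f x2 - m < i%:R * eps.
  have le_i : (Num.truncn ((f x2 - m) / eps)).+1%:R * eps <= i%:R * eps.
    by apply: ler_wpM2r; [exact: ltW | rewrite ler_nat].
  by apply: lt_le_trans le_i; rewrite -ltr_pdivrMr // truncnS_gt.
have penalty : i%:R * g x <= i%:R * h - i%:R * eps.
  by rewrite -mulrBr; apply: ler_wpM2l => //; apply: gap.
have := lerD (fmax x Kx) penalty.
by move/le_lt_trans; apply; rewrite addrCA [m + _]addrC ltrD2l ltrBlDr -ltrBlDl.
Qed.

Section IntegerFunctionals.
Context {R : realType} {n : nat}.

Lemma idot_continuous (a : 'rV[int]_n) : continuous (@idot R n a).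
Proof.
apply: continuous_big => [|i _]; first exact: add_continuous.
move=> x; apply: continuous_comp (@coord_continuous R 1 n 0 i x) _.
exact: mulrl_continuous.
Qed.

Lemma idot_shift (a c : 'rV[int]_n) (k : nat) (x : 'rV[R]_n) :
  idot (a + k%:R *: c) x = idot a x + k%:R * idot c x.
Proof.
rewrite /idot mulr_sumr -big_split; apply: eq_bigr => i _ /=.
by rewrite !mxE intrD mulrDl intrM rmorph_nat mulrA.
Qed.

Lemma hK_ub {K : set 'rV[R]_n} (K0 : K !=set0) (cK : compact K)
    (a : 'rV[int]_n) (y : 'rV[R]_n) : K y -> idot a y <= hK K a.
Proof.
have [x0 _ [mx0 hx0]] := compact_sup_attained K0 cK (idot_continuous a).
by rewrite /hK hx0; exact: mx0.
Qed.

Lemma hK_attained {K : set 'rV[R]_n} (K0 : K !=set0) (cK : compact K)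
    (a : 'rV[int]_n) : exists2 x, K x & hK K a = idot a x.
Proof.
by have [x0 Kx0 [_ hx0]] := compact_sup_attained K0 cK (idot_continuous a); exists x0.
Qed.

Lemma face_nonempty {K : set 'rV[R]_n} (K0 : K !=set0) (cK : compact K)
    (c : 'rV[int]_n) : face K c !=set0.
Proof. by have [x0 Kx0 hx0] := hK_attained K0 cK c; exists x0; split. Qed.

Lemma face_compact {K : set 'rV[R]_n} (cK : compact K)
    (c : 'rV[int]_n) : compact (face K c).
Proof.
apply: compact_closedI => //.
exact: (preimage_closed (fun x _ => idot_continuous c x) (@closed_eq R (hK K c))).
Qed.

Lemma floor_hK_shift {K : set 'rV[R]_n} (K0 : K !=set0) (cK : compact K)
    (c a : 'rV[int]_n) {z : int} :
  hK K c = z%:~R ->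
  exists N : nat, forall i : nat, (N <= i)%N ->
    Num.floor (hK K (a + i%:R *: c)) = Num.floor (hK (face K c) a) + i%:R * z.
Proof.
move=> hz; set hF := hK (face K c) a.
have hF_ub y : K y -> idot c y = hK K c -> idot a y <= hF.
  by move=> Ky Hy; apply: (hK_ub (face_nonempty K0 cK c) (face_compact cK c)).
have [N penalized] := eventually_penalized (hK K c) (Num.floor hF + 1)%:~R K0 cK
  (idot_continuous a) (idot_continuous c) (hK_ub K0 cK c)
  (fun y Ky Hy => le_lt_trans (hF_ub y Ky Hy) (floorD1_gt hF)).
exists N => i Ni; apply: floor_def.
rewrite !intrD intrM rmorph_nat -hz; apply/andP; split.
  have [x1 [Kx1 Hx1] hx1] := hK_attained (face_nonempty K0 cK c) (face_compact cK c) a.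
  apply: le_trans (lerD (floor_le hF) (lexx _)) _.
  by rewrite /hF hx1 -Hx1 -idot_shift; exact: hK_ub.
have [x3 Kx3 ->] := hK_attained K0 cK (a + i%:R *: c).
by rewrite idot_shift addrAC -intrD; exact: penalized.
Qed.

End IntegerFunctionals.

Theorem lemma2p4 (R : realType) (n : nat) (K : set 'rV[R]_n) (c : 'rV[int]_n) :
  K !=set0 -> compact K ->
  hK K c \is a Num.int ->
  forall a : 'rV[int]_n, exists N : nat, forall i : nat, (N <= i)%N ->
    Hcg K (a + i%:R *: c) `&` Heq K c = Hcg (face K c) a `&` Heq K c.
Proof.
move=> K0 cK /intrP [z hz] a.
have [N floor_shift] := floor_hK_shift K0 cK c a hz.
exists N => i Ni; apply/seteqP; split => x [cut Hx]; split => //; move: cut.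
(* on H^=_K(c) both cuts compare a x, shifted by i h_K(c) = i z *)
all: by rewrite /Hcg /= floor_shift // idot_shift Hx hz intrD intrM rmorph_nat lerD2r.
Qed.
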